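(* For every odd $k\ge3$, the parity–majority distribution $P_{\rm MAJ}$ (a distribution on functions $\Omega^{2k}\to\{0,1\}$) satisfies SYM, BAL, MIN and UNI, where these conditions are read with arity $2k$ in place of $k$.
   Context: $\Omega=\{\pm1\}$, $q=2$, $k\ge3$ odd. For $\tau\in\Omega^{2k}$ and a permutation $\theta$ of $[2k]$ define $\psi_{\tau,\theta}:\Omega^{2k}\to\{0,1\}$, $\psi_{\tau,\theta}(\sigma)=\mathbf 1\{\prod_{i=1}^k\sigma_{\theta(i)}\tau_i=1\}\mathbf 1\{\sum_{i=k+1}^{2k}\sigma_{\theta(i)}\tau_i<0\}+\mathbf 1\{\prod_{i=1}^k\sigma_{\theta(i)}\tau_i=-1\}\mathbf 1\{\sum_{i=k+1}^{2k}\sigma_{\theta(i)}\tau_i>0\}$. $\Psi=\{\psi_{\tau,\theta}\}$ and $P_{\rm MAJ}$ is uniform on $\Psi$. Let $K=2k$ be the arity, $\boldsymbol\psi$ a sample from $P=P_{\rm MAJ}$, $\xi=q^{-K}\sum_{\sigma\in\Omega^K}\mathbb E[\boldsymbol\psi(\sigma)]$, $\psi^{\theta'}(\sigma)=\psi(\sigma_{\theta'(1)},\dots,\sigma_{\theta'(K)})$. SYM: for all $i\in[K]$, $\omega\in\Omega$, $\psi\in\Psi$, $\sum_{\tau\in\Omega^K}\mathbf 1\{\tau_i=\omega\}\psi(\tau)=q^{K-1}\xi$, and $P(\psi)=P(\psi^{\theta'})$ for every permutation $\theta'$ of $[K]$. BAL: $\phi(\mu)=\sum_{\tau\in\Omega^K}\mathbb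 E[\boldsymbol\psi(\tau)]\prod_{i=1}^K\mu(\tau_i)$ is concave on distributions on $\Omega$ and maximised at the uniform distribution. MIN: among distributions $\rho$ on $\Omega\times\Omega$ with both marginals uniform, $\varphi(\rho)=\sum_{\sigma,\tau\in\Omega^K}\mathbb E[\boldsymbol\psi(\sigma)\boldsymbol\psi(\tau)]\prod_{i=1}^K\rho(\sigma_i,\tau_i)$ has the uniform distribution as unique global minimiser. UNI: every CSP with constraint functions from $\Psi$ (constraint $a$ on a $K$-tuple $\partial a$ of variables) in which each constraint has pairwise distinct variables and whose bipartite variable–constraint graph is unicyclic admits $\sigma$ with $\prod_a\psi_a(\sigma(\partial a))>0$. *)

From HB Require Import structures.
From mathcomp Require Import all_boot all_order all_algebra all_fingroup.
Set Implicit Arguments. Unset Strict Implicit. Unset Printing Implicit Defensive.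
Import Order.TTheory GRing.Theory Num.Theory.
Local Open Scope ring_scope.

(* Omega = {+1,-1} is represented by bool: true = +1, false = -1 (q = 2). *)
Definition spin (b : bool) : int := if b then 1 else -1.

(* Assignments Omega^K and constraint functions Omega^K -> {0,1}
   (the value of a constraint function is a bool, read as 0/1). *)
Definition Assign (K : nat) := {ffun 'I_K -> bool}.
Definition Fun (K : nat) := {ffun Assign K -> bool}.

(* psi_{tau,theta} with arity 2k; index i in [2k] is the ordinal i-1, so
   "1 <= i <= k" is "i < k" and "k+1 <= i <= 2k" is "k <= i". *)
Definition psi_maj (k : nat) (tau : Assign (2 * k)) (th : {perm 'I_(2 * k)})
  : Fun (2 * k) :=
  [ffun s : Assign (2 * k) =>
     let p := \prod_(i : 'I_(2 * k) | (i < k)%N) (spin (s (th i)) * spin (tau i)) in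
     let S := \sum_(i : 'I_(2 * k) | (k <= i)%N) (spin (s (th i)) * spin (tau i)) in
     ((p == 1) && (S < 0)) || ((p == -1) && (0 < S))].

Definition Psi_maj (k : nat) : {set Fun (2 * k)} :=
  [set psi_maj tau th | tau : Assign (2 * k), th : {perm 'I_(2 * k)}].

Definition P_maj (R : realFieldType) (k : nat) (psi : Fun (2 * k)) : R :=
  if psi \in Psi_maj k then (#|Psi_maj k|%:R)^-1 else 0.

Section Conditions.
Variables (R : realFieldType) (K : nat).
Variable (Psi : {set Fun K}).
Variable (P : Fun K -> R).

Definition Epsi (s : Assign K) : R := \sum_(psi : Fun K) P psi * (psi s)%:R.

Definition xi : R := (2%:R ^+ K)^-1 * \sum_(s : Assign K) Epsi s.

Definition permfun (th : {perm 'I_K}) (psi : Fun K) : Fun K :=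
  [ffun s : Assign K => psi [ffun i => s (th i)]].

Definition SYM : Prop :=
  (forall (i : 'I_K) (w : bool) (psi : Fun K), psi \in Psi ->
     \sum_(t : Assign K) (t i == w)%:R * (psi t)%:R = 2%:R ^+ K.-1 * xi)
  /\ (forall (th : {perm 'I_K}) (psi : Fun K), P psi = P (permfun th psi)).

Definition is_dist (mu : {ffun bool -> R}) : Prop :=
  (forall w, 0 <= mu w) /\ \sum_(w : bool) mu w = 1.

Definition phiB (mu : {ffun bool -> R}) : R :=
  \sum_(t : Assign K) Epsi t * \prod_(i : 'I_K) mu (t i).

Definition unif1 : {ffun bool -> R} := [ffun _ => 2%:R^-1].

Definition BAL : Prop :=
  (forall (mu nu : {ffun bool -> R}) (t : R), is_dist mu -> is_dist nu ->
     0 <= t -> t <= 1 ->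
     t * phiB mu + (1 - t) * phiB nu
       <= phiB [ffun w => t * mu w + (1 - t) * nu w])
  /\ (forall mu, is_dist mu -> phiB mu <= phiB unif1).

Definition is_coupling (rho : {ffun bool * bool -> R}) : Prop :=
  (forall w, 0 <= rho w) /\ \sum_(w : bool * bool) rho w = 1 /\
  (forall w, \sum_(w' : bool) rho (w, w') = 2%:R^-1) /\
  (forall w, \sum_(w' : bool) rho (w', w) = 2%:R^-1).

Definition Epsi2 (s t : Assign K) : R :=
  \sum_(psi : Fun K) P psi * ((psi s)%:R * (psi t)%:R).

Definition varphiM (rho : {ffun bool * bool -> R}) : R :=
  \sum_(s : Assign K) \sum_(t : Assign K)
     Epsi2 s t * \prod_(i : 'I_K) rho (s i, t i).

Definition unif2 : {ffun bool * bool -> R} := [ffun _ => 4%:R^-1].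

Definition MIN : Prop :=
  is_coupling unif2 /\
  (forall rho, is_coupling rho -> rho <> unif2 -> varphiM unif2 < varphiM rho).

End Conditions.

(* Factor graph of a CSP with n variables ('I_n) and m constraints ('I_m);
   constraint a acts on the K-tuple dv a of variables. *)
Section FactorGraph.
Variables (K n m : nat) (dv : 'I_m -> {ffun 'I_K -> 'I_n}).

Definition fg_adj : rel ('I_n + 'I_m) :=
  fun x y => match x, y with
             | inl v, inr a => v \in codom (dv a)
             | inr a, inl v => v \in codom (dv a)
             | _, _ => false
             end.

Definition fg_edges : {set 'I_n * 'I_m} :=
  [set e : 'I_n * 'I_m | e.1 \in codom (dv e.2)].

Definition unicyclic : Prop :=
  (forall x y : 'I_n + 'I_m, connect fg_adj x y) /\ #|fg_edges| = (n + m)%N.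
End FactorGraph.

Definition UNI (K : nat) (Psi : {set Fun K}) : Prop :=
  forall (n m : nat) (dv : 'I_m -> {ffun 'I_K -> 'I_n}) (ps : 'I_m -> Fun K),
    (forall a, ps a \in Psi) ->
    (forall a, injective (dv a)) ->
    unicyclic dv ->
    exists s : {ffun 'I_n -> bool},
      (0 < \prod_(a : 'I_m) nat_of_bool (ps a [ffun i => s (dv a i)]))%N.

From HB Require Import structures.
From mathcomp Require Import all_boot all_order all_algebra all_fingroup.
From mathcomp Require Import zify ring lra.
Set Implicit Arguments. Unset Strict Implicit. Unset Printing Implicit Defensive.
Import Order.TTheory GRing.Theory Num.Theory.
Local Open Scope ring_scope.

(* Write the constraint psi_{tau,theta} as a parity block theta(1..k) and a majority block
   theta(k+1..2k).  Flipping one variable of the parity block negates psi, because the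
   majority sum of k odd signs is never 0; flipping all 2k variables leaves psi unchanged,
   because for odd k both the parity and the majority sum change sign.

   The first fact gives E[psi(sigma)] = 1/2 and the counts of SYM, and makes
   phi(mu) = (sum mu)^(2k) / 2 constant on distributions, whence BAL.  A coupling with uniform
   marginals has the form rho(a,b) = (1 + c a b) / 4, and varphi(rho) is a positive multiple of
   sum_psi sum_A c^|A| hat psi(A)^2.  By the second fact the odd |A| terms vanish, and by
   Parseval some nonempty A has hat psi(A) <> 0, so c = 0 is the strict minimum: MIN.

   For UNI, unicyclicity bounds the number of edges of the factor subgraph spanned by any set
   B of constraints by its number of vertices.  Double counting then shows, for k >= 3, that
   some constraint of B has a parity variable used by no other constraint of B.  Satisfying
   the other constraints first and flipping that private variable if needed satisfies B. *)

Lemma card_ord_lt (n m : nat) : (m <= n)%N -> #|[pred i : 'I_n | (i < m)%N]| = m.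
Proof.
move=> le_mn; have inj_widen : injective (widen_ord le_mn).
  by move=> i j /(congr1 val) eq_ij; apply: val_inj.
rewrite -[RHS](card_ord m) -(card_codom inj_widen).
apply: eq_card => i; rewrite !inE; apply/idP/codomP => [lt_im | [j ->]] //=.
by exists (Ordinal lt_im); apply: val_inj.
Qed.

Lemma card_ord_ge (n m : nat) : (m <= n)%N -> #|[pred i : 'I_n | (m <= i)%N]| = (n - m)%N.
Proof.
move=> le_mn; have -> : #|[pred i : 'I_n | (m <= i)%N]| = #|[predC [pred i : 'I_n | (i < m)%N]]|.
  by apply: eq_card => i; rewrite !inE -leqNgt.
have := cardC [pred i : 'I_n | (i < m)%N].
by rewrite card_ord_lt // card_ord => card_n; rewrite -[in RHS]card_n addKn.
Qed.

Section SignVectors.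
Variable I : finType.

Definition sign_vector (e : I -> int) := forall i, (e i == 1) || (e i == -1).

Lemma prodr_sign_vector (e : I -> int) (P : pred I) : sign_vector e ->
  (\prod_(i | P i) e i == 1) || (\prod_(i | P i) e i == -1).
Proof.
move=> e_sign; apply: (big_ind (fun x : int => (x == 1) || (x == -1))) => //.
by move=> x y /orP[] /eqP-> /orP[] /eqP->; rewrite ?mulr1 ?mulN1r ?opprK ?eqxx ?orbT.
Qed.

Lemma sumr_sign_vector (e : I -> int) (P : pred I) : sign_vector e ->
  \sum_(i | P i) e i = #|P|%:Z - 2 * \sum_(i | P i) (e i == -1)%:Z.
Proof.
move=> e_sign; rewrite -sum1_card -natz natr_sum mulr_sumr -sumrB.
by apply: eq_bigr => i _; case/orP: (e_sign i) => /eqP->.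
Qed.

Lemma sumr_sign_vector_neq0 (e : I -> int) (P : pred I) : sign_vector e ->
  odd #|P| -> \sum_(i | P i) e i != 0.
Proof.
move=> e_sign odd_P; rewrite sumr_sign_vector //.
have : 0 <= \sum_(i | P i) (e i == -1)%:Z by apply: sumr_ge0 => i _; case: (e i == -1).
case: (\sum_(i | P i) (e i == -1)%:Z) => // N _.
by rewrite -[#|P|]odd_double_half odd_P subr_eq0; apply/eqP; lia.
Qed.

End SignVectors.

Section ParityMajority.
Variable k : nat.

Definition pmaj (e : 'I_(2 * k) -> int) : bool :=
  let p := \prod_(i : 'I_(2 * k) | (i < k)%N) e i in
  let S := \sum_(i : 'I_(2 * k) | (k <= i)%N) e i in
  ((p == 1) && (S < 0)) || ((p == -1) && (0 < S)).

Lemma card_parity_block : #|[pred i : 'I_(2 * k) | (i < k)%N]| = k.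
Proof. by rewrite card_ord_lt ?leq_pmull. Qed.

Lemma card_majority_block : #|[pred i : 'I_(2 * k) | (k <= i)%N]| = k.
Proof. by rewrite card_ord_ge ?leq_pmull // mul2n -addnn addnK. Qed.

Lemma eq_pmaj (e e' : 'I_(2 * k) -> int) : e =1 e' -> pmaj e = pmaj e'.
Proof. by move=> ee'; rewrite /pmaj !(eq_bigr _ (fun i _ => ee' i)). Qed.

Hypothesis k_odd : odd k.

Lemma pmaj_flip (e e' : 'I_(2 * k) -> int) (i0 : 'I_(2 * k)) : sign_vector e ->
  (i0 < k)%N -> e' i0 = - e i0 -> (forall i, i != i0 -> e' i = e i) ->
  pmaj e' = ~~ pmaj e.
Proof.
move=> e_sign i0_parity e'i0 e'E; rewrite /pmaj.
have -> : \sum_(i : 'I_(2 * k) | (k <= i)%N) e' i = \sum_(i : 'I_(2 * k) | (k <= i)%N) e i.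
  by apply: eq_bigr => i le_ki; apply: e'E; apply: contraTneq le_ki => ->; rewrite -ltnNge.
rewrite (bigD1 i0) //= [in RHS](bigD1 i0) //= e'i0.
rewrite (eq_bigr e); last by move=> i /andP[_ /e'E].
have := sumr_sign_vector_neq0 (P := [pred i : 'I_(2 * k) | (k <= i)%N]) e_sign.
rewrite card_majority_block => /(_ k_odd).
have := prodr_sign_vector (fun i : 'I_(2 * k) => (i < k)%N && (i != i0)) e_sign.
case/orP: (e_sign i0) => /eqP-> /orP[] /eqP->;
  case: ltrgtP; rewrite //= ?mulr1 ?mulN1r ?opprK ?eqxx ?andbT //.
Qed.

Lemma pmaj_opp (e : 'I_(2 * k) -> int) : pmaj (fun i => - e i) = pmaj e.
Proof.
rewrite /pmaj prodrN sumrN card_parity_block -signr_odd k_odd expr1 mulN1r.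
by rewrite oppr_lt0 oppr_gt0 !eqr_oppLR opprK orbC.
Qed.

End ParityMajority.

Section BooleanFunctions.
Variable T : finType.

Definition flip_at (j : T) (s : {ffun T -> bool}) : {ffun T -> bool} :=
  [ffun x => if x == j then ~~ s x else s x].

Definition negf (s : {ffun T -> bool}) : {ffun T -> bool} := [ffun x => ~~ s x].

Lemma flip_atK j : involutive (flip_at j).
Proof. by move=> s; apply/ffunP => x; rewrite !ffunE; case: eqP; rewrite ?negbK. Qed.

Lemma negfK : involutive negf.
Proof. by move=> s; apply/ffunP => x; rewrite !ffunE negbK. Qed.

End BooleanFunctions.

Lemma spinN b : spin (~~ b) = - spin b. Proof. by case: b. Qed.

Section PsiMaj.
Variables (k : nat) (tau : Assign (2 * k)) (th : {perm 'I_(2 * k)}).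

Definition spins (s : Assign (2 * k)) (i : 'I_(2 * k)) : int := spin (s (th i)) * spin (tau i).

Lemma psi_majE s : psi_maj tau th s = pmaj (spins s).
Proof. by rewrite ffunE. Qed.

Lemma spins_sign_vector s : sign_vector (spins s).
Proof. by move=> i; rewrite /spins; case: (s (th i)); case: (tau i). Qed.

Hypothesis k_odd : odd k.

Lemma psi_maj_flip_at s (i : 'I_(2 * k)) : (i < k)%N ->
  psi_maj tau th (flip_at (th i) s) = ~~ psi_maj tau th s.
Proof.
move=> i_parity; rewrite !psi_majE; apply: (pmaj_flip k_odd (spins_sign_vector s) i_parity).
  by rewrite /spins ffunE eqxx spinN mulNr.
by move=> j ne_ji; rewrite /spins ffunE (inj_eq perm_inj) (negbTE ne_ji).
Qed.

Lemma psi_maj_negf s : psi_maj tau th (negf s) = psi_maj tau th s.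
Proof.
rewrite !psi_majE -[RHS](pmaj_opp k_odd); apply: eq_pmaj => i.
by rewrite /spins ffunE spinN mulNr.
Qed.

End PsiMaj.

Lemma psi_maj_flip_sign k (tau : Assign (2 * k)) th s (i : 'I_(2 * k)) : odd k -> (i < k)%N ->
  psi_maj (flip_at i tau) th s = ~~ psi_maj tau th s.
Proof.
move=> k_odd i_parity; rewrite !psi_majE.
apply: (pmaj_flip k_odd (spins_sign_vector tau th s) i_parity).
  by rewrite /spins ffunE eqxx spinN mulrN.
by move=> j ne_ji; rewrite /spins ffunE (negbTE ne_ji).
Qed.

Lemma permfunK K (th : {perm 'I_K}) : cancel (permfun th) (permfun th^-1%g).
Proof.
move=> psi; apply/ffunP => s; rewrite !ffunE; congr (psi _).
by apply/ffunP => i; rewrite !ffunE permK.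
Qed.

Lemma permfun_psi_maj k (tau : Assign (2 * k)) th th' :
  permfun th' (psi_maj tau th) = psi_maj tau (th * th')%g.
Proof.
by apply/ffunP => s; rewrite ffunE !psi_majE; apply: eq_pmaj => i; rewrite /spins ffunE permM.
Qed.

Lemma Psi_majP k (psi : Fun (2 * k)) :
  psi \in Psi_maj k -> exists tau th, psi = psi_maj tau th.
Proof. by case/imset2P => tau th _ _ ->; exists tau, th. Qed.

Lemma psi_maj_in k (tau : Assign (2 * k)) th : psi_maj tau th \in Psi_maj k.
Proof. exact: imset2_f. Qed.

Lemma Psi_maj_card_gt0 k : (0 < #|Psi_maj k|)%N.
Proof. by apply/card_gt0P; exists (psi_maj [ffun => true] 1); apply: psi_maj_in. Qed.

Lemma permfun_Psi_maj k th (psi : Fun (2 * k)) :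
  (permfun th psi \in Psi_maj k) = (psi \in Psi_maj k).
Proof.
suff permfun_in th' (f : Fun (2 * k)) : f \in Psi_maj k -> permfun th' f \in Psi_maj k.
  apply/idP/idP; last exact: permfun_in.
  by move/(permfun_in th^-1%g); rewrite permfunK.
by case/Psi_majP=> tau [th1 ->]; rewrite permfun_psi_maj psi_maj_in.
Qed.

Lemma negf_Psi_maj k (psi : Fun (2 * k)) : odd k ->
  (negf psi \in Psi_maj k) = (psi \in Psi_maj k).
Proof.
move=> k_odd; have k_gt0 := odd_gt0 k_odd.
have k2_gt0 : (0 < 2 * k)%N by rewrite muln_gt0.
suff negf_in (f : Fun (2 * k)) : f \in Psi_maj k -> negf f \in Psi_maj k.
  by apply/idP/idP => /negf_in //; rewrite negfK.
case/Psi_majP=> tau [th ->].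
have -> : negf (psi_maj tau th) = psi_maj (flip_at (Ordinal k2_gt0) tau) th.
  by apply/ffunP => s; rewrite ffunE psi_maj_flip_sign.
exact: psi_maj_in.
Qed.

Lemma sum_involution_half (R : pzSemiRingType) (T : finType) (Q : pred T)
    (f : T -> bool) (g : T -> T) :
  involutive g -> (forall x, Q (g x) = Q x) -> (forall x, f (g x) = ~~ f x) ->
  2 * \sum_(x in Q) (f x)%:R = #|Q|%:R :> R.
Proof.
move=> gK Qg fg; have sum_negf : \sum_(x in Q) (f x)%:R = \sum_(x in Q) (~~ f x)%:R :> R.
  rewrite (reindex_inj (inv_inj gK)) /=.
  by apply: eq_big => x; [rewrite -!topredE /= Qg | rewrite fg].
rewrite mulr_natl mulr2n {2}sum_negf -big_split /= -sum1_card natr_sum.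
by apply: eq_bigr => x _; case: (f x); rewrite /= ?addr0 ?add0r.
Qed.

Lemma card_Assign K : #|{: Assign K}| = (2 ^ K)%N.
Proof. by rewrite card_ffun card_bool card_ord. Qed.

Lemma card_coord_eq (R : pzSemiRingType) K (i : 'I_K) (w : bool) :
  2 * #|[pred t : Assign K | t i == w]|%:R = (2 ^ K)%:R :> R.
Proof.
have flip_coord t : (flip_at i t i == w) = ~~ (t i == w).
  by rewrite ffunE eqxx; case: (t i); case: w.
rewrite -card_Assign -(sum_involution_half R (Q := predT) (flip_atK i) (fun _ => erefl) flip_coord).
rewrite -sum1_card natr_sum big_mkcond /=; congr (_ * _).
by apply: eq_bigr => t _; rewrite inE; case: (t i == w).
Qed.

Section UniformOnPsiMaj.
Variables (R : realFieldType) (k : nat).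

Lemma sum_P_maj (F : Fun (2 * k) -> R) :
  \sum_psi @P_maj R k psi * F psi = (#|Psi_maj k|%:R)^-1 * \sum_(psi in Psi_maj k) F psi.
Proof.
rewrite mulr_sumr [RHS]big_mkcond /=; apply: eq_bigr => psi _.
by rewrite /P_maj; case: (psi \in Psi_maj k); rewrite ?mul0r.
Qed.

Hypothesis k_odd : odd k.

Lemma Epsi_maj s : Epsi (@P_maj R k) s = 2^-1.
Proof.
have negf_s psi : negf psi s = ~~ psi s by rewrite ffunE.
have := sum_involution_half R (@negfK _) (fun psi => negf_Psi_maj psi k_odd) negf_s.
have card_neq0 : (#|Psi_maj k|%:R : R) != 0 by rewrite pnatr_eq0 -lt0n Psi_maj_card_gt0.
rewrite /Epsi sum_P_maj => half; rewrite -half in card_neq0 *.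
by rewrite invfM -mulrA mulVf ?mulr1 //; apply: contraNneq card_neq0 => ->; rewrite mulr0.
Qed.

Lemma xi_maj : xi (@P_maj R k) = 2^-1.
Proof.
rewrite /xi (eq_bigr (fun _ => 2^-1)) => [|s _]; last exact: Epsi_maj.
rewrite sumr_const card_Assign -[_ *+ (2 ^ _)%N]mulr_natr natrX mulrCA mulVf ?mulr1 //.
by rewrite expf_neq0 ?pnatr_eq0.
Qed.

Lemma phiB_maj (mu : {ffun bool -> R}) : phiB (@P_maj R k) mu = 2^-1 * (\sum_b mu b) ^+ (2 * k).
Proof.
rewrite /phiB (eq_bigr (fun t : Assign (2 * k) => 2^-1 * \prod_i mu (t i))) => [|t _].
  by rewrite -mulr_sumr -(bigA_distr_bigA (fun _ b => mu b)) prodr_const card_ord.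
by rewrite Epsi_maj.
Qed.

Lemma BAL_maj : BAL (@P_maj R k).
Proof.
have phiB_dist mu : is_dist mu -> phiB (@P_maj R k) mu = 2^-1.
  by case=> _ mu1; rewrite phiB_maj mu1 expr1n mulr1.
have unif1_dist : is_dist (unif1 R).
  by split=> [w|]; rewrite ?big_bool !ffunE ?invr_ge0 ?ler0n //=; field.
split=> [mu nu t mu_dist nu_dist t_ge0 t_le1 | mu mu_dist]; last by rewrite !phiB_dist.
have mix_dist : is_dist [ffun w => t * mu w + (1 - t) * nu w].
  case: mu_dist nu_dist => [mu_ge0 mu1] [nu_ge0 nu1].
  split=> [w|]; first by rewrite ffunE addr_ge0 ?mulr_ge0 ?subr_ge0.
  under eq_bigr do rewrite ffunE.
  by rewrite big_split /= -!mulr_sumr mu1 nu1 !mulr1 subrKC.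
by rewrite !phiB_dist // -mulrDl subrKC mul1r.
Qed.

Lemma sum_coord_psi_maj tau th (i : 'I_(2 * k)) (w : bool) : (1 < k)%N ->
  \sum_(t : Assign (2 * k)) (t i == w)%:R * (psi_maj tau th t)%:R
    = 2 ^+ (2 * k).-1 * 2^-1 :> R.
Proof.
move=> k_gt1; have k2_gt0 : (0 < 2 * k)%N by lia.
have [j j_parity thj_neq_i] : exists2 j : 'I_(2 * k), (j < k)%N & th j != i.
  have lt1 : (1 < 2 * k)%N by lia.
  case: (eqVneq (th (Ordinal k2_gt0)) i) => [th0i | ].
    by exists (Ordinal lt1); rewrite // -th0i (inj_eq perm_inj).
  by exists (Ordinal k2_gt0); rewrite //= ltnW.
pose Q := [pred t : Assign (2 * k) | t i == w].
have coord_flip t : Q (flip_at (th j) t) = Q t.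
  by rewrite /= ffunE (eq_sym i) (negbTE thj_neq_i).
have := sum_involution_half R (flip_atK (th j)) coord_flip
  (fun t => psi_maj_flip_at tau th k_odd t j_parity).
have -> : \sum_(t in Q) (psi_maj tau th t)%:R
    = \sum_(t : Assign (2 * k)) (t i == w)%:R * (psi_maj tau th t)%:R :> R.
  rewrite big_mkcond; apply: eq_bigr => t _; rewrite inE.
  by case: (t i == w); rewrite ?mul1r ?mul0r.
have two_neq0 : (2 : R) != 0 by rewrite pnatr_eq0.
have two_pow : 2 ^+ (2 * k) = 2 * 2 ^+ (2 * k).-1 :> R by rewrite -exprS prednK.
have := card_coord_eq R i w; rewrite natrX two_pow => card2 sum2.
apply: (mulfI two_neq0); rewrite sum2 mulrCA mulfV ?mulr1 //.
exact: (mulfI two_neq0).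
Qed.

End UniformOnPsiMaj.

Lemma SYM_maj (R : realFieldType) k : odd k -> (1 < k)%N -> SYM (Psi_maj k) (@P_maj R k).
Proof.
move=> k_odd k_gt1; split=> [i w psi /Psi_majP [tau [th ->]] | th psi].
  by rewrite xi_maj // sum_coord_psi_maj.
by rewrite /P_maj permfun_Psi_maj.
Qed.

Section Fourier.
Variables (R : comPzRingType) (K : nat).

Definition spinR (b : bool) : R := if b then 1 else -1.

Definition wt (A : Assign K) : nat := #|[pred i | A i]|.

Definition walsh (A s : Assign K) : R := \prod_i (if A i then spinR (s i) else 1).

Definition fourier (f : Assign K -> R) (A : Assign K) : R := \sum_s f s * walsh A s.

Lemma expr_wt (c : R) A : c ^+ wt A = \prod_i (if A i then c else 1).
Proof. by rewrite -big_mkcond prodr_const. Qed.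

Lemma prod_correlation_walsh (c : R) (s t : Assign K) :
  \prod_i (1 + c * spinR (s i) * spinR (t i)) = \sum_A c ^+ wt A * walsh A s * walsh A t.
Proof.
rewrite (eq_bigr (fun i => \sum_b (if b then c * spinR (s i) * spinR (t i) else 1))); last first.
  by move=> i _; rewrite big_bool addrC.
rewrite bigA_distr_bigA /=; apply: eq_bigr => A _.
rewrite expr_wt /walsh -!big_split /=.
by apply: eq_bigr => i _; case: (A i); rewrite ?mulr1.
Qed.

Lemma correlation_fourier (f : Assign K -> R) (c : R) :
  \sum_s \sum_t f s * f t * \prod_i (1 + c * spinR (s i) * spinR (t i))
    = \sum_A c ^+ wt A * fourier f A ^+ 2.
Proof.
under eq_bigr do under eq_bigr do rewrite prod_correlation_walsh mulr_sumr.
under eq_bigr do rewrite exchange_big /=.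
rewrite exchange_big /=; apply: eq_bigr => A _.
rewrite expr2 /fourier mulr_suml mulr_sumr; apply: eq_bigr => s _.
by rewrite !mulr_sumr; apply: eq_bigr => t _; ring.
Qed.

Lemma prod_spin_agree (s t : Assign K) :
  \prod_i (1 + 1 * spinR (s i) * spinR (t i)) = if s == t then 2 ^+ K else 0.
Proof.
case: eqP => [<- | neq_st].
  rewrite -[K in 2 ^+ K]card_ord -prodr_const.
  by apply: eq_bigr => i _; case: (s i); rewrite /=; ring.
have [i neq_sti] : exists i, s i != t i.
  apply/existsP; rewrite -negb_forall; apply: contra_notN neq_st => /forallP st.
  by apply/ffunP => i; apply/eqP.
rewrite (bigD1 i) //=; move: neq_sti; rewrite /spinR.
by case: (s i); case: (t i) => //= _; rewrite !mul1r ?mulr1 subrr mul0r.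
Qed.

Lemma parseval (f : Assign K -> R) :
  \sum_A fourier f A ^+ 2 = 2 ^+ K * \sum_s f s ^+ 2.
Proof.
have -> : \sum_A fourier f A ^+ 2 = \sum_A 1 ^+ wt A * fourier f A ^+ 2.
  by apply: eq_bigr => A _; rewrite expr1n mul1r.
rewrite -correlation_fourier mulr_sumr; apply: eq_bigr => s _.
under eq_bigr do rewrite prod_spin_agree.
rewrite (bigD1 s) //= eqxx big1 ?addr0 => [|t /negPf]; first by ring.
by rewrite eq_sym => ->; rewrite mulr0.
Qed.

Lemma walsh_negf (A s : Assign K) : walsh A (negf s) = (-1) ^+ wt A * walsh A s.
Proof.
rewrite expr_wt /walsh -big_split /=; apply: eq_bigr => i _; rewrite ffunE.
by case: (A i); rewrite ?mulr1 //; case: (s i); rewrite /spinR /= ?mulr1 ?mulrNN ?mulr1.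
Qed.

End Fourier.

Lemma fourier_odd (R : realDomainType) K (F : Assign K -> R) A :
  (forall s, F (negf s) = F s) -> odd (wt A) -> fourier F A = 0.
Proof.
move=> F_even odd_A; suff : fourier F A = - fourier F A by lra.
rewrite {1}/fourier (reindex_inj (inv_inj (@negfK _))) /= -sumrN.
apply: eq_bigr => s _; rewrite F_even walsh_negf -signr_odd odd_A expr1.
by rewrite mulN1r mulrN.
Qed.

Lemma wt_eq0 K (A : Assign K) : (wt A == 0)%N = (A == [ffun => false]).
Proof.
apply/eqP/eqP => [/card0_eq A0 | ->]; last by apply: eq_card0 => i; rewrite !inE ffunE.
by apply/ffunP => i; rewrite ffunE; move: (A0 i); rewrite !inE => ->.
Qed.

Section BalancedFourier.
Variables (R : realFieldType) (K : nat) (F : Assign K -> R).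
Hypothesis F_idem : forall s, F s ^+ 2 = F s.
Hypothesis F_even : forall s, F (negf s) = F s.
Hypothesis F_balanced : 2 * \sum_s F s = 2 ^+ K.

Local Notation empty := ([ffun => false] : Assign K).

Lemma fourier_empty : fourier F empty = \sum_s F s.
Proof.
by apply: eq_bigr => s _; rewrite /walsh big1 ?mulr1 // => i _; rewrite ffunE.
Qed.

Lemma sum_fourier_nonempty : \sum_(A | A != empty) fourier F A ^+ 2 = fourier F empty ^+ 2.
Proof.
have := parseval F; rewrite [X in _ = _ * X](eq_bigr F (fun s _ => F_idem s)).
rewrite (bigD1 empty) //= addrC fourier_empty -F_balanced => /(canRL (addrK _)) ->.
by rewrite -mulrA -expr2 mulr_natl mulr2n addrK.
Qed.

Lemma weighted_fourier_gap (c : R) : c != 0 ->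
  \sum_A 0 ^+ wt A * fourier F A ^+ 2 < \sum_A c ^+ wt A * fourier F A ^+ 2.
Proof.
move=> c_neq0.
have wt_empty : wt empty = 0%N by apply/eqP; rewrite wt_eq0.
rewrite (bigD1 empty) //= [X in _ < X](bigD1 empty) //= wt_empty !expr0 !mul1r ltrD2l.
rewrite big1 => [|A]; last by rewrite -wt_eq0 expr0n => /negPf ->; rewrite mul0r.
have term_ge0 A : 0 <= c ^+ wt A * fourier F A ^+ 2.
  have [odd_A | even_A] := boolP (odd (wt A)); first by rewrite fourier_odd // expr0n mulr0.
  by rewrite mulr_ge0 ?sqr_ge0 ?exprn_even_ge0.
have fourier_empty_neq0 : fourier F empty != 0.
  rewrite fourier_empty; apply/eqP => S0; move: F_balanced; rewrite S0 mulr0 => /eqP.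
  by rewrite eq_sym expf_eq0 pnatr_eq0 andbF.
have [A /andP [A_neq0 fA_gt0]] : exists A, (A != empty) && (0 < fourier F A ^+ 2).
  apply: psumr_neq0P => [A _|]; first exact: sqr_ge0.
  by rewrite sum_fourier_nonempty; apply/eqP; rewrite sqrf_eq0.
have even_A : ~~ odd (wt A).
  by apply: contraTN fA_gt0 => odd_A; rewrite fourier_odd // expr0n ltxx.
rewrite (bigD1 A) //= ltr_pwDl ?sumr_ge0 // mulr_gt0 // exprn_even_gt0 //.
by rewrite c_neq0 orbT.
Qed.

End BalancedFourier.

Lemma varphiM_fourier (R : realFieldType) K (P : Fun K -> R) (rho : {ffun bool * bool -> R})
    (c : R) :
  (forall a b, rho (a, b) = 4^-1 * (1 + c * spinR R a * spinR R b)) ->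
  varphiM P rho = (4^-1) ^+ K *
    \sum_psi P psi * \sum_A c ^+ wt A * fourier (fun s => (psi s)%:R) A ^+ 2.
Proof.
move=> rhoE; rewrite mulr_sumr; under eq_bigr do rewrite -correlation_fourier !mulr_sumr.
under eq_bigr do under eq_bigr do rewrite !mulr_sumr.
rewrite [RHS]exchange_big; apply: eq_bigr => s _; rewrite [RHS]exchange_big.
apply: eq_bigr => t _; rewrite /Epsi2 mulr_suml; apply: eq_bigr => psi _.
rewrite (eq_bigr _ (fun i _ => rhoE (s i) (t i))) big_split prodr_const card_ord /=.
by ring.
Qed.

Lemma coupling_spinE (R : realFieldType) (rho : {ffun bool * bool -> R}) :
  is_coupling rho -> forall a b,
  rho (a, b) = 4^-1 * (1 + (4 * rho (true, true) - 1) * spinR R a * spinR R b).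
Proof.
case=> _ [_ [row col]] a b.
have := row true; have := row false; have := col true; have := col false.
rewrite !big_bool /=; case: a; case: b; rewrite /spinR; lra.
Qed.

Lemma unif2_coupling (R : realFieldType) : is_coupling (unif2 R).
Proof.
have quarter_twice : 4^-1 + 4^-1 = 2^-1 :> R by field.
split=> [w|]; first by rewrite ffunE invr_ge0 ler0n.
split; last by split=> w; rewrite big_bool !ffunE /= quarter_twice.
rewrite (eq_bigr (fun _ => 4^-1)) => [|w _]; last by rewrite ffunE.
by rewrite sumr_const card_prod card_bool -(mulr_natr (4^-1 : R)) mulVf // pnatr_eq0.
Qed.

Section PsiMajFourier.
Variables (R : realFieldType) (k : nat) (tau : Assign (2 * k)) (th : {perm 'I_(2 * k)}).
Hypothesis k_odd : odd k.

Lemma psi_maj_balanced : 2 * \sum_s (psi_maj tau th s)%:R = 2 ^+ (2 * k) :> R.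
Proof.
have k2_gt0 : (0 < 2 * k)%N by rewrite muln_gt0 (odd_gt0 k_odd).
have flip0 s := psi_maj_flip_at tau th k_odd s (i := Ordinal k2_gt0) (odd_gt0 k_odd).
have := sum_involution_half R (Q := predT) (flip_atK _) (fun _ => erefl) flip0.
by rewrite card_Assign natrX.
Qed.

Lemma psi_maj_fourier_gap (c : R) : c != 0 ->
  \sum_A 0 ^+ wt A * fourier (fun s => (psi_maj tau th s)%:R : R) A ^+ 2
    < \sum_A c ^+ wt A * fourier (fun s => (psi_maj tau th s)%:R : R) A ^+ 2.
Proof.
move=> c_neq0; apply: weighted_fourier_gap c_neq0.
- by move=> s; case: (psi_maj tau th s); rewrite ?expr1n ?expr0n.
- by move=> s; rewrite psi_maj_negf.
- exact: psi_maj_balanced.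
Qed.

End PsiMajFourier.

Lemma MIN_maj (R : realFieldType) k : odd k -> MIN (@P_maj R k).
Proof.
move=> k_odd; split=> [|rho rho_coupling rho_neq]; first exact: unif2_coupling.
have unif2E a b : unif2 R (a, b) = 4^-1 * (1 + 0 * spinR R a * spinR R b).
  by rewrite ffunE !mul0r addr0 mulr1.
set c := 4 * rho (true, true) - 1.
have c_neq0 : c != 0.
  apply: contra_notN rho_neq => /eqP c0; apply/ffunP => -[a b].
  by rewrite coupling_spinE // -/c c0 -unif2E.
rewrite (varphiM_fourier _ unif2E) (varphiM_fourier _ (coupling_spinE rho_coupling)) -/c.
rewrite ltr_pM2l ?exprn_gt0 ?invr_gt0 ?ltr0n // !sum_P_maj.
rewrite ltr_pM2l ?invr_gt0 ?ltr0n ?Psi_maj_card_gt0 //.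
apply: ltr_sum => [|psi /Psi_majP [tau [th ->]]]; last exact: psi_maj_fourier_gap.
by apply/hasP; exists (psi_maj [ffun => true] 1); rewrite ?mem_index_enum ?psi_maj_in.
Qed.

Section DistanceToSet.
Variables (X : finType) (adj : rel X) (H : {set X}).

Fixpoint ball (j : nat) : {set X} :=
  if j is j'.+1 then ball j' :|: [set x | [exists y in ball j', adj x y]] else H.

Lemma ball_path x p : last x p \in H -> path adj x p -> x \in ball (size p).
Proof.
elim: p x => [|y p IHp] x //= last_in /andP [adj_xy path_yp].
by rewrite !inE; apply/orP; right; apply/existsP; exists y; rewrite IHp.
Qed.

Hypothesis H_reachable : forall x, exists2 y, y \in H & connect adj x y.

Lemma in_some_ball x : exists j, x \in ball j.
Proof.
have [y y_in /connectP [p path_p y_last]] := H_reachable x.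
by exists (size p); apply: ball_path; rewrite -?y_last.
Qed.

Definition dist_to x := ex_minn (in_some_ball x).

Lemma in_ball_dist_to x : x \in ball (dist_to x).
Proof. by rewrite /dist_to; case: ex_minnP. Qed.

Lemma dist_to_min x j : x \in ball j -> (dist_to x <= j)%N.
Proof. by rewrite /dist_to; case: ex_minnP => d _ d_min /d_min. Qed.

Lemma dist_to_step x : x \notin H -> exists y, adj x y && (dist_to y < dist_to x)%N.
Proof.
move=> x_notin; have := in_ball_dist_to x; case dist_x: (dist_to x) => [|d] /=.
  by move=> x_in; rewrite x_in in x_notin.
rewrite !inE => /orP [x_in | /existsP [y /andP [y_in adj_xy]]].
  by have := dist_to_min x_in; rewrite dist_x ltnn.
by exists y; rewrite adj_xy ltnS dist_to_min.
Qed.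

Definition toward x : X :=
  if [pick y | adj x y && (dist_to y < dist_to x)%N] is Some y then y else x.

Lemma towardP x : x \notin H -> adj x (toward x) && (dist_to (toward x) < dist_to x)%N.
Proof.
move=> x_notin; rewrite /toward; case: pickP => // no_step.
by have [y] := dist_to_step x_notin; rewrite no_step.
Qed.

(* An edge [x, toward x] determines its endpoint x: the other endpoint is closer to [H]. *)
Lemma toward_edge_inj (Y : Type) (edge : X -> X -> Y) :
  (forall x1 y1 x2 y2, adj x1 y1 -> adj x2 y2 -> edge x1 y1 = edge x2 y2 ->
      x1 = x2 \/ (x1 = y2 /\ y1 = x2)) ->
  {in ~: H &, injective (fun x => edge x (toward x))}.
Proof.
move=> edgeP x1 x2; rewrite !inE => x1_notin x2_notin same_edge.
have /andP [adj1 closer1] := towardP x1_notin.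
have /andP [adj2 closer2] := towardP x2_notin.
case: (edgeP _ _ _ _ adj1 adj2 same_edge) => // -[x1E x2E].
by move: closer1 closer2; rewrite x2E -x1E; lia.
Qed.

End DistanceToSet.

Lemma sum_mem_card (T : finType) (A : {pred T}) : (\sum_(x : T) (x \in A) = #|A|)%N.
Proof. by rewrite -sum1_card [RHS]big_mkcond; apply: eq_bigr => x _; case: (x \in A). Qed.

Lemma sum_card_exchange (T I : finType) (B : {pred I}) (S : I -> {set T}) :
  (\sum_(v : T) \sum_(b in B) (v \in S b) = \sum_(b in B) #|S b|)%N.
Proof. by rewrite exchange_big /=; apply: eq_bigr => b _; rewrite sum_mem_card. Qed.

Section FactorSubgraph.
Variables (K n m : nat) (dv : 'I_m -> {ffun 'I_K -> 'I_n}).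
Hypothesis dv_inj : forall a, injective (dv a).
Hypothesis dv_unicyclic : unicyclic dv.

Definition vars_of (B : {set 'I_m}) : {set 'I_n} :=
  [set v | [exists a in B, v \in codom (dv a)]].

Definition subgraph_vertices (B : {set 'I_m}) : {set 'I_n + 'I_m} :=
  (inl @: vars_of B) :|: (inr @: B).

Definition subgraph_edges (B : {set 'I_m}) : {set 'I_n * 'I_m} :=
  [set e : 'I_n * 'I_m | (e.1 \in codom (dv e.2)) && (e.2 \in B)].

Definition fg_edge (x y : 'I_n + 'I_m) : option ('I_n * 'I_m) :=
  match x, y with
  | inl v, inr a | inr a, inl v => Some (v, a)
  | _, _ => None
  end.

Lemma inl_subgraph B v : (inl v \in subgraph_vertices B) = (v \in vars_of B).
Proof.
rewrite inE; apply/orP/idP => [[/imsetP [v' v'_in [->]] // | /imsetP [a _ //]] | v_in].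
by left; apply: imset_f.
Qed.

Lemma inr_subgraph B a : (inr a \in subgraph_vertices B) = (a \in B).
Proof.
rewrite inE; apply/orP/idP => [[/imsetP [v _ //] | /imsetP [a' a'_in [->]] //] | a_in].
by right; apply: imset_f.
Qed.

Lemma card_subgraph_vertices B : #|subgraph_vertices B| = (#|vars_of B| + #|B|)%N.
Proof.
rewrite cardsU !card_imset; try by move=> ? ? [].
suff -> : inl @: vars_of B :&: inr @: B = set0 by rewrite cards0 subn0.
by apply/setP => x; rewrite !inE; apply/negP => /andP [/imsetP [v _ ->] /imsetP [a _ //]].
Qed.

Lemma card_subgraph_edges B : #|subgraph_edges B| = (#|B| * K)%N.
Proof.
rewrite -sum_mem_card (eq_bigr (fun e => nat_of_bool ((e.1 \in codom (dv e.2)) && (e.2 \in B))));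
  last by move=> e _; rewrite inE.
rewrite -(pair_bigA _ (fun v a => nat_of_bool ((v \in codom (dv a)) && (a \in B)))) /=.
rewrite exchange_big /= -sum_mem_card big_distrl /=; apply: eq_bigr => a _.
case: (a \in B); last by rewrite big1 // => v _; rewrite andbF.
rewrite mul1n (eq_bigr (fun v => nat_of_bool (v \in codom (dv a)))) => [|v _].
  by rewrite sum_mem_card card_codom ?card_ord.
by rewrite andbT.
Qed.

(* Map every vertex outside the subgraph to the edge along which it gets closer to the
   subgraph: this injects the outside vertices into the outside edges. *)
Lemma unicyclic_subgraph_edges B : B != set0 -> (#|B| * K <= #|vars_of B| + #|B|)%N.
Proof.
case/set0Pn => a0 a0_in.
have reach x : exists2 y, y \in subgraph_vertices B & connect (fg_adj dv) x y.
  by exists (inr a0); [rewrite inr_subgraph | exact: dv_unicyclic.1].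
have edgeP x1 y1 x2 y2 : fg_adj dv x1 y1 -> fg_adj dv x2 y2 -> fg_edge x1 y1 = fg_edge x2 y2 ->
    x1 = x2 \/ (x1 = y2 /\ y1 = x2).
  by case: x1 y1 x2 y2 => ? [] ? [] ? [] ? //= _ _ [-> ->]; auto.
pose out_edge x := fg_edge x (toward reach x).
have card_out : #|out_edge @: ~: subgraph_vertices B| = #|~: subgraph_vertices B|.
  by apply: card_in_imset; apply: toward_edge_inj.
have out_sub :
    (out_edge @: ~: subgraph_vertices B) \subset (Some @: (fg_edges dv :\: subgraph_edges B)).
  apply/subsetP => _ /imsetP [x x_out ->]; rewrite inE in x_out.
  have /andP [adj_x _] := towardP reach x_out.
  rewrite /out_edge; move: adj_x x_out.
  case: x => [v|a]; case: (toward _ _) => [v'|a'] //= adj_x x_out;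
    apply: imset_f; rewrite !inE /= adj_x /= ?andbT.
    by apply: contra x_out => a'_in; rewrite inl_subgraph inE; apply/exists_inP; exists a'.
  by rewrite inr_subgraph in x_out.
have sub_edges : subgraph_edges B \subset fg_edges dv.
  by apply/subsetP => e; rewrite !inE => /andP [].
have := subset_leq_card out_sub; rewrite card_out card_imset => [|? ? [] //].
rewrite cardsD (setIidPr sub_edges) dv_unicyclic.2 card_subgraph_edges.
have := cardsC (subgraph_vertices B); rewrite card_sum !card_ord card_subgraph_vertices.
have := subset_leq_card sub_edges; rewrite dv_unicyclic.2 card_subgraph_edges; lia.
Qed.

End FactorSubgraph.

Section PrivateParityVariable.
Variables (k n m : nat) (dv : 'I_m -> {ffun 'I_(2 * k) -> 'I_n}).
Variable th : 'I_m -> {perm 'I_(2 * k)}.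
Hypothesis dv_inj : forall a, injective (dv a).

Definition majority_vars (b : 'I_m) : {set 'I_n} :=
  [set dv b (th b i) | i in [pred i : 'I_(2 * k) | (k <= i)%N]].

Lemma card_majority_vars b : #|majority_vars b| = k.
Proof.
by rewrite card_imset ?card_majority_block // => i j /dv_inj /perm_inj.
Qed.

(* If every parity variable of every constraint of [B] is shared with another constraint of [B],
   then each variable of [B] has degree at least 2 in [B], or is a majority variable. *)
Lemma shared_parity_vars_bound (B : {set 'I_m}) :
  (forall a (i : 'I_(2 * k)), a \in B -> (i < k)%N ->
     exists2 b, b \in B & (b != a) && (dv a (th a i) \in codom (dv b))) ->
  (2 * #|vars_of dv B| <= #|B| * (2 * k) + #|B| * k)%N.
Proof.
move=> shared.
pose deg v := (\sum_(b in B) (v \in [set v in codom (dv b)]))%N.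
pose maj v := (\sum_(b in B) (v \in majority_vars b))%N.
have deg_ge1 v a : a \in B -> v \in codom (dv a) -> (1 <= deg v)%N.
  by move=> a_in v_in; rewrite /deg (bigD1 a) //= inE v_in.
have deg_maj v : v \in vars_of dv B -> (2 <= deg v + maj v)%N.
  rewrite inE => /exists_inP [a a_in v_in]; have /codomP [j v_def] := v_in.
  have j_def : j = th a ((th a)^-1 j)%g by rewrite permKV.
  case: (ltnP ((th a)^-1 j)%g k) => [i_parity | i_majority].
    have [b b_in /andP [b_neq_a v_in_b]] := shared a _ a_in i_parity.
    rewrite -j_def -v_def in v_in_b.
    suff : (2 <= deg v)%N by lia.
    rewrite /deg (bigD1 a) //= inE v_in (bigD1 b) /=; last by rewrite b_in b_neq_a.
    by rewrite inE v_in_b.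
  have v_maj : v \in majority_vars a by rewrite v_def j_def; apply: imset_f.
  have : (1 <= maj v)%N by rewrite /maj (bigD1 a) //= v_maj.
  by have := deg_ge1 v a a_in v_in; lia.
have sum_deg : (\sum_v deg v = #|B| * (2 * k))%N.
  rewrite /deg sum_card_exchange (eq_bigr (fun _ => 2 * k)%N) ?sum_nat_const // => b _.
  by rewrite cardsE card_codom ?card_ord.
have sum_maj : (\sum_v maj v = #|B| * k)%N.
  rewrite /maj sum_card_exchange (eq_bigr (fun _ => k)) ?sum_nat_const // => b _.
  exact: card_majority_vars.
rewrite -sum_deg -sum_maj -big_split /= [X in (_ <= X)%N](bigID (mem (vars_of dv B))) /=.
apply: leq_trans (leq_addr _ _); rewrite -sum1_card big_distrr /=.
by apply: leq_sum => v v_in; rewrite muln1 deg_maj.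
Qed.

Hypothesis dv_unicyclic : unicyclic dv.
Hypothesis k_gt2 : (2 < k)%N.

Lemma exists_private_parity_var (B : {set 'I_m}) : B != set0 ->
  exists2 a, a \in B & exists2 i : 'I_(2 * k), (i < k)%N &
    forall b, b \in B -> b != a -> dv a (th a i) \notin codom (dv b).
Proof.
move=> B_neq0; have [private | no_private] := boolP [exists a in B, [exists i : 'I_(2 * k),
    (i < k)%N && [forall b in B, (b != a) ==> (dv a (th a i) \notin codom (dv b))]]].
  case/exists_inP: private => a a_in /existsP [i /andP [i_parity /forall_inP private]].
  by exists a => //; exists i => // b b_in; apply/implyP/private.
have shared a (i : 'I_(2 * k)) : a \in B -> (i < k)%N ->
    exists2 b, b \in B & (b != a) && (dv a (th a i) \in codom (dv b)).
  move=> a_in i_parity; move: no_private; rewrite negb_exists_in => /forall_inP /(_ a a_in).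
  rewrite negb_exists => /forallP /(_ i); rewrite i_parity negb_forall_in.
  by case/exists_inP => b b_in; rewrite negb_imply negbK => b_shares; exists b.
(* 4k|B| <= 2 #|vars_of B| + 2|B| <= (3k + 2)|B| would force k <= 2. *)
have := shared_parity_vars_bound shared.
have := unicyclic_subgraph_edges dv_inj dv_unicyclic B_neq0.
have : (0 < #|B|)%N by rewrite card_gt0.
nia.
Qed.

End PrivateParityVariable.

Lemma psi_maj_satisfiable k n m (dv : 'I_m -> {ffun 'I_(2 * k) -> 'I_n})
    (tau : 'I_m -> Assign (2 * k)) (th : 'I_m -> {perm 'I_(2 * k)}) (B : {set 'I_m}) :
  odd k -> (2 < k)%N -> (forall a, injective (dv a)) -> unicyclic dv ->
  exists s : {ffun 'I_n -> bool},
    forall a, a \in B -> psi_maj (tau a) (th a) [ffun i => s (dv a i)].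
Proof.
move=> k_odd k_gt2 dv_inj dv_unicyclic.
elim: {B}_.+1 {-2}B (ltnSn #|B|) => // N IHN B card_B.
have [-> | B_neq0] := eqVneq B set0; first by exists [ffun => false] => a; rewrite inE.
have [a a_in [i i_parity private]] := exists_private_parity_var th dv_inj dv_unicyclic k_gt2 B_neq0.
have [s' sat_rest] : exists s' : {ffun 'I_n -> bool},
    forall b, b \in B :\ a -> psi_maj (tau b) (th b) [ffun j => s' (dv b j)].
  by apply: IHN; rewrite (cardsD1 a B) a_in in card_B.
pose v := dv a (th a i).
exists (if psi_maj (tau a) (th a) [ffun j => s' (dv a j)] then s' else flip_at v s') => b b_in.
have [-> | b_neq_a] := eqVneq b a.
  case: ifPn => // unsat.
  have -> : [ffun j => flip_at v s' (dv a j)] = flip_at (th a i) [ffun j => s' (dv a j)].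
    by apply/ffunP => j; rewrite !ffunE (inj_eq (dv_inj a)).
  by rewrite psi_maj_flip_at // negbT.
have b_in' : b \in B :\ a by rewrite !inE b_neq_a.
case: ifP => _; first exact: sat_rest.
have -> : [ffun j => flip_at v s' (dv b j)] = [ffun j => s' (dv b j)].
  apply/ffunP => j; rewrite !ffunE; case: eqP => // v_in_b.
  by have := private b b_in b_neq_a; rewrite -/v -v_in_b codom_f.
exact: sat_rest.
Qed.

Lemma UNI_maj k : odd k -> (2 < k)%N -> UNI (Psi_maj k).
Proof.
move=> k_odd k_gt2 n m dv ps ps_in dv_inj dv_unicyclic.
have [f psE] : exists f : 'I_m -> Assign (2 * k) * {perm 'I_(2 * k)},
    forall a, ps a = psi_maj (f a).1 (f a).2.
  apply: (@fin_all_exists _ (fun _ => (Assign (2 * k) * {perm 'I_(2 * k)})%type)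
    (fun a p => ps a = psi_maj p.1 p.2)).
  by move=> a; have [tau [th ->]] := Psi_majP (ps_in a); exists (tau, th).
have [s sat] := psi_maj_satisfiable (fun a => (f a).1) (fun a => (f a).2) setT k_odd k_gt2
  dv_inj dv_unicyclic.
by exists s; apply: prodn_gt0 => a; rewrite psE sat ?inE.
Qed.

Theorem mainTheorem16 (R : realFieldType) (k : nat) :
  odd k -> (3 <= k)%N ->
  SYM (Psi_maj k) (@P_maj R k) /\ BAL (@P_maj R k) /\ MIN (@P_maj R k)
  /\ UNI (Psi_maj k).
Proof.
move=> k_odd k_ge3; have k_gt1 : (1 < k)%N by apply: ltnW.
split; first exact: SYM_maj.
split; first exact: BAL_maj.
split; first exact: MIN_maj.
exact: UNI_maj.
Qed.
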